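(* Let $0\le c\le1$. For every $n\in\mathbb{N}$, $\mathcal{L}(\{x\in\mathbb{I}\colon y_n(x)\le c\})=c$.
   Context: $\mathcal{L}$ is Lebesgue measure, $\mathbb{I}=(0,1)\setminus\mathbb{Q}$. Define $T\colon[0,1)\to[0,1)$ by: for $k\in\mathbb{N}$, $Tx=\lceil 1/x\rceil x-1$ if $x\in(\frac{1}{2k},\frac{1}{2k-1})$; $Tx=1-\lfloor 1/x\rfloor x$ if $x\in(\frac{1}{2k+1},\frac{1}{2k})$; $Tx=0$ if $x\in\{0\}\cup\{1/n\colon n\ge 2\}$. For $x\in(0,1)$ define $d_1(x)=\lceil 1/x\rceil$, $s_1(x)=1$ if $x\in[\frac{1}{2k},\frac{1}{2k-1})$ for some $k$, and $d_1(x)=\lfloor 1/x\rfloor$, $s_1(x)=-1$ if $x\in[\frac{1}{2k+1},\frac{1}{2k})$ for some $k$; $d_{n+1}(x)=d_1(T^nx)$, $s_{n+1}(x)=s_1(T^nx)$, $\epsilon_1(x)=1$, $\epsilon_{n+1}(x)=\prod_{k=1}^ns_k(x)$. For $x\in\mathbb{I}$ define $y_1(x)=x$ and, for $n\ge2$, $y_n(x)=(d_{n-1}(x)-1)T^{n-1}x$ if $\epsilon_n(x)=\epsilon_{n-1}(x)$, and $y_n(x)=(d_{n-1}(x)+1)T^{n-1}x$ if $\epsilon_n(x)=-\epsilon_{n-1}(x)$. *)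

From HB Require Import structures.
From mathcomp Require Import all_boot all_order all_algebra.
From mathcomp Require Import all_classical all_reals all_analysis.
Set Implicit Arguments. Unset Strict Implicit. Unset Printing Implicit Defensive.
Import Order.TTheory GRing.Theory Num.Theory.
Local Open Scope ring_scope.
Local Open Scope classical_set_scope.

Section Defs.
Variable R : realType.
Implicit Types x : R.

Definition inA x : bool :=
  `[< exists k : nat, (0 < k)%N /\ 1 / (2 * k%:R) < x < 1 / (2 * k%:R - 1) >].
Definition inB x : bool :=
  `[< exists k : nat, (0 < k)%N /\ 1 / (2 * k%:R + 1) < x < 1 / (2 * k%:R) >].
Definition inAc x : bool :=
  `[< exists k : nat, (0 < k)%N /\ 1 / (2 * k%:R) <= x < 1 / (2 * k%:R - 1) >].
Definition inBc x : bool :=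
  `[< exists k : nat, (0 < k)%N /\ 1 / (2 * k%:R + 1) <= x < 1 / (2 * k%:R) >].

(* The map T on [0,1) (values outside [0,1) are irrelevant junk: 0). *)
Definition Tmap x : R :=
  if inA x then (Num.ceil (1 / x))%:~R * x - 1
  else if inB x then 1 - (Num.floor (1 / x))%:~R * x
  else 0.

(* d_1 and s_1 on (0,1) (junk 0 elsewhere) *)
Definition d1 x : R :=
  if inAc x then (Num.ceil (1 / x))%:~R
  else if inBc x then (Num.floor (1 / x))%:~R
  else 0.
Definition s1 x : R :=
  if inAc x then 1 else if inBc x then -1 else 0.

Definition dn (n : nat) x : R := d1 (iter n.-1 Tmap x).
Definition sn (n : nat) x : R := s1 (iter n.-1 Tmap x).
Definition epsn (n : nat) x : R := \prod_(1 <= k < n) sn k x.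

Definition yn (n : nat) x : R :=
  if (n <= 1)%N then x
  else if epsn n x == epsn n.-1 x
       then (dn n.-1 x - 1) * iter n.-1 Tmap x
       else (dn n.-1 x + 1) * iter n.-1 Tmap x.

Definition irr01 : set R :=
  [set x | 0 < x < 1 /\ ~ (exists q : rat, x = ratr q)].

End Defs.

(* The intervals B_k = (1/(k+1), 1/k), k >= 1, partition the irrationals of
   (0,1). On B_k the map T is affine with rational coefficients, of slope k+1
   for odd k and -k for even k, and it maps B_k onto (0, 1/m_k), where m_k is
   k for odd k and k+1 for even k; moreover y_2 = m_k T on B_k. In both cases
   |slope| * m_k = k(k+1) = 1/|B_k|.
   Call a set S of irrationals of (0,1) c-uniform when |S /\ (0,1/j)| = c/j
   for all j >= 1. By the affine change of variables on each branch, the set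
   {y_2 <= c} and the preimage under T of a c-uniform set both fill a
   proportion c of every B_k; summing over the branches k >= j shows that they
   are c-uniform. Since y_(n+2) = y_2 o T^n on irrationals, induction on n and
   j = 1 give the theorem for n >= 2; for n = 1 the set is {x <= c}. *)

From HB Require Import structures.
From mathcomp Require Import all_boot all_order all_algebra.
From mathcomp Require Import all_classical all_reals all_analysis.
From mathcomp Require Import measurable_realfun.
From mathcomp Require Import ring lra zify.
Set Implicit Arguments.
Unset Strict Implicit.
Unset Printing Implicit Defensive.
Import Order.TTheory GRing.Theory Num.Theory.
Local Open Scope ring_scope.
Local Open Scope classical_set_scope.

Section ContinuedFractionMap.
Variable R : realType.
Local Notation lam := (@lebesgue_measure R).
Local Notation irr01 := (@irr01 R).
Local Notation Tmap := (@Tmap R).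

(* Phrased as in irr01, so that irr01 x unfolds to 0 < x < 1 /\ ~ rational x. *)
Definition rational : set R := [set x | exists q : rat, x = ratr q].

Lemma rational_nat n : rational n%:R.
Proof. by exists n%:R; rewrite ratr_nat. Qed.

Lemma rationalM a b : rational a -> rational b -> rational (a * b).
Proof. by move=> [p ->] [q ->]; exists (p * q); rewrite rmorphM. Qed.

Lemma rational_affine a b u :
  rational a -> rational b -> rational u -> rational (a * u + b).
Proof. by move=> [p ->] [q ->] [r ->]; exists (p * r + q); rewrite rmorphD rmorphM. Qed.

Lemma rational_affine_inv a b u : a != 0 ->
  rational a -> rational b -> rational (a * u + b) -> rational u.
Proof.
move=> a0 [p pa] [q ->] [r e]; rewrite {}pa in a0 e *.
by exists ((r - q) / p); rewrite fmorph_div rmorphB /= -e; field.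
Qed.

Lemma rationalE : range ratr = rational.
Proof. by apply/seteqP; split => x [q]; [move=> _ <-|move=> ->]; exists q. Qed.

Lemma measurable_rational : measurable rational.
Proof.
have -> : rational = \bigcup_(q : rat) [set ratr q].
  by apply/seteqP; split => [x [q ->]|x [q _ ->]]; exists q.
by apply: bigcupT_measurable_rat => q; exact: measurable_set1.
Qed.

Lemma measureD_rational (A : set R) : measurable A -> lam (A `\` rational) = lam A.
Proof.
move=> mA; rewrite [RHS](measureDI lam mA measurable_rational).
rewrite [X in (_ + X)%E](_ : _ = 0%E) ?adde0 //; apply/eqP.
rewrite eq_le measure_ge0 andbT -(lebesgue_measure_rat R) rationalE.
apply: le_measure; rewrite ?inE; last exact: subIsetr.
- exact: measurableI mA measurable_rational.
- exact: measurable_rational.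
Qed.

Lemma irr01E : irr01 = `]0, 1[ `\` rational.
Proof. by apply/seteqP; split => x; rewrite /irr01 /= in_itv. Qed.

Lemma measurable_irr01 : measurable irr01.
Proof. by rewrite irr01E; apply: measurableD => //; exact: measurable_rational. Qed.

Lemma measure_irr01I (A : set R) : measurable A -> A `<=` `]0, 1[ ->
  lam (irr01 `&` A) = lam A.
Proof.
by move=> mA A01; rewrite irr01E setIC setIDA (setIidl A01) measureD_rational.
Qed.

Lemma measure_irr01_le c : 0 <= c -> c <= 1 ->
  lam [set x | irr01 x /\ x <= c] = c%:E.
Proof.
move=> c0 c1; have -> : [set x | irr01 x /\ x <= c] = `]0, c] `\` rational.
  apply/seteqP; split=> [x [[/andP[x0 x1] xQ] xc]|x [/= + xQ]].
    by split; rewrite //= in_itv /= x0.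
  rewrite /= in_itv /= => /andP[x0 xc]; split => //; split => //.
  rewrite x0 lt_neqAle (le_trans xc c1) andbT; apply/eqP => x1; apply: xQ.
  by rewrite x1; exact: (rational_nat 1).
rewrite measureD_rational // lebesgue_measure_itv /= lte_fin.
have [_|c_le0] := ltrP 0 c; first by rewrite oppr0 adde0.
by have -> : c = 0 by apply/le_anti; rewrite c_le0 c0.
Qed.

Definition affine (a b x : R) : R := a * x + b.

Lemma measurable_affine a b : measurable_fun [set: R] (affine a b).
Proof. by apply: measurable_funD => //; exact: measurable_funM. Qed.

Lemma measurable_preimage_affine a b A :
  measurable A -> measurable (affine a b @^-1` A).
Proof. by move=> mA; rewrite -[X in measurable X]setTI; exact: measurable_affine. Qed.

Lemma preimage_affine_itv a b x y : 0 < a ->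
  affine a b @^-1` `]x, y] = `](x - b) / a, (y - b) / a].
Proof.
move=> a0; apply/seteqP; split => z; rewrite /affine /= !in_itv /=;
  by rewrite ltr_pdivrMr // ler_pdivlMr // ![z * a]mulrC ltrBlDr lerBrDr.
Qed.

Lemma measure_preimage_affine_pos a b A : 0 < a -> measurable A ->
  lam (affine a b @^-1` A) = (a^-1%:E * lam A)%E.
Proof.
move=> a0 mA.
suff -> : lam A = (a%:E * lam (affine a b @^-1` A))%E.
  by rewrite muleA -EFinM mulVf ?gt_eqF // mul1e.
have := lebesgue_measure_unique (mu := mscale (NngNum (ltW a0))
  (pushforward lam (affine a b : measurableTypeR R -> measurableTypeR R))).
move=> /(_ (measurable_affine a b)) -> // _ [[x y] _ <-].
rewrite /= /mscale /= /pushforward preimage_affine_itv //.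
rewrite !lebesgue_measure_itv /= !lte_fin ltr_pM2r ?invr_gt0 // ltrD2r.
case: ifP => _; last by rewrite mule0.
by rewrite -!EFinD -EFinM; congr EFin; field; rewrite gt_eqF.
Qed.

Lemma measure_preimage_affine a b A : a != 0 -> measurable A ->
  lam (affine a b @^-1` A) = ((`|a|^-1)%:E * lam A)%E.
Proof.
move=> a0 mA; have [a_lt0|a_gt0|a_eq0] := ltgtP a 0.
- have -> : affine a b @^-1` A = affine (- a) (- b) @^-1` (affine (-1) 0 @^-1` A).
    by apply/seteqP; split => x; rewrite /affine /= addr0 mulN1r mulNr -opprD opprK.
  rewrite measure_preimage_affine_pos ?oppr_gt0 ?ltr0_norm //; last first.
    exact: measurable_preimage_affine.
  have -> : affine (-1) 0 @^-1` A = -%R @^-1` A.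
    by apply/seteqP; split => x; rewrite /affine /= addr0 mulN1r.
  by have := lebesgue_measureN mA; rewrite /pushforward => ->.
- by rewrite gtr0_norm //; exact: measure_preimage_affine_pos.
- by rewrite a_eq0 eqxx in a0.
Qed.

Definition branch (k : nat) : set R := `](k.+1%:R)^-1, (k%:R)^-1[.
Definition initial_itv (j : nat) : set R := `]0, (j%:R)^-1[.

Lemma branch_inv_bounds i u : (0 < i)%N -> branch i u ->
  [/\ 0 < u, i%:R < u^-1 & u^-1 < i.+1%:R].
Proof.
rewrite /branch /= in_itv /= => i0 /andP[lo hi].
have u0 : 0 < u by apply: lt_trans lo; rewrite invr_gt0 ltr0n.
by split; [|rewrite invf_pgt|rewrite invf_plt]; rewrite ?posrE ?ltr0n.
Qed.

Lemma branch_index i m u : (0 < i)%N -> (0 < m)%N -> branch i u ->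
  (m.+1%:R)^-1 <= u -> u < (m%:R)^-1 -> m = i.
Proof.
rewrite /branch /= in_itv /= => i0 m0 /andP[lo hi] lo' hi'.
have := le_lt_trans lo' hi; have := lt_trans lo hi'.
by rewrite !ltf_pV2 ?posrE ?ltr0n // !ltr_nat; lia.
Qed.

Lemma branch_sub_initial j k : (0 < j <= k)%N -> branch k `<=` initial_itv j.
Proof.
move=> /andP[j0 jk] u bu; have [u0 _ _] := branch_inv_bounds (leq_trans j0 jk) bu.
move: bu; rewrite /branch /initial_itv /= !in_itv /= u0 => /andP[_ /lt_le_trans->] //.
by rewrite lef_pV2 ?posrE ?ltr0n ?ler_nat // (leq_trans j0).
Qed.

Lemma initial_itv_sub01 j : (0 < j)%N -> initial_itv j `<=` `]0, 1[.
Proof.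
move=> j0 u; rewrite /initial_itv /= !in_itv /= => /andP[-> /lt_le_trans->] //.
by rewrite invf_le1 ?ler1n ?ltr0n.
Qed.

Lemma branch_sub01 k : (0 < k)%N -> branch k `<=` `]0, 1[.
Proof.
move=> k0; apply: subset_trans (initial_itv_sub01 (ltn0Sn 0)).
exact: branch_sub_initial.
Qed.

Lemma irr01_sub_initial_itv1 : irr01 `<=` initial_itv 1.
Proof. by move=> x [x01 _]; rewrite /initial_itv /= in_itv invr1. Qed.

Lemma irr01_branch x : irr01 x -> exists2 i, (0 < i)%N & branch i x.
Proof.
move=> [/andP[x0 x1] xQ]; set i := Num.truncn x^-1.
have /andP[lo hi] : (i%:R <= x^-1 < i.+1%:R) by apply: truncn_itv; rewrite invr_ge0 ltW.
have i0 : (0 < i)%N.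
  by rewrite -ltnS -(ltr_nat R) (le_lt_trans _ hi) // invf_ge1 ?ltW.
have lo' : i%:R < x^-1.
  rewrite lt_neqAle lo andbT; apply/eqP => ix; apply: xQ.
  by exists i%:R^-1; rewrite fmorphV rmorph_nat ix invrK.
exists i => //; rewrite /branch /= in_itv /=.
by rewrite -[x]invrK !ltf_pV2 ?posrE ?ltr0n ?invr_gt0 // lo' hi.
Qed.

Lemma trivIset_branch : trivIset [set k | (0 < k)%N] branch.
Proof.
move=> i j i0 j0 [u [bi bj]]; move: (bj); rewrite /branch /= in_itv => /andP[lo hi].
by rewrite (branch_index i0 j0 bi (ltW lo) hi).
Qed.

Lemma initial_itv_bigcup S j : S `<=` irr01 -> (0 < j)%N ->
  S `&` initial_itv j = \bigcup_(k in [set k | (j <= k)%N]) (S `&` branch k).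
Proof.
move=> Sirr j0; apply/seteqP; split => [u [Su ju]|u [k /= jk [Su bu]]].
  have [k k0 bu] := irr01_branch (Sirr u Su); exists k => //=.
  move: ju bu; rewrite /initial_itv /branch /= !in_itv /= => /andP[_ hi] /andP[lo _].
  by rewrite -ltnS -(ltr_nat R) -ltf_pV2 ?posrE ?ltr0n ?(lt_trans lo).
by split => //; apply: (branch_sub_initial _ bu); rewrite j0.
Qed.

Lemma measure_branch k : (0 < k)%N -> lam (branch k) = ((k%:R * k.+1%:R)^-1)%:E.
Proof.
move=> k0; rewrite lebesgue_measure_itv /= lte_fin.
rewrite ltf_pV2 ?posrE ?ltr0n // ltr_nat ltnSn.
congr EFin; rewrite -natr1; field.
by rewrite natr1 !pnatr_eq0; lia.
Qed.

Lemma measure_initial_itv j : (0 < j)%N -> lam (initial_itv j) = ((j%:R)^-1)%:E.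
Proof.
by move=> j0; rewrite lebesgue_measure_itv /= lte_fin invr_gt0 ltr0n j0 oppr0 adde0.
Qed.

Lemma measure_initial_itv_series S j : S `<=` irr01 -> (0 < j)%N ->
  (forall k, (0 < k)%N -> measurable (S `&` branch k)) ->
  lam (S `&` initial_itv j) =
  (\sum_(k <oo | k \in [set k | (j <= k)%N]) lam (S `&` branch k))%E.
Proof.
move=> Sirr j0 mS; rewrite initial_itv_bigcup // measure_bigcup //.
  by move=> k /= jk; apply: mS; exact: leq_trans jk.
apply: trivIset_setIl; apply: sub_trivIset trivIset_branch => k /=.
exact: leq_trans.
Qed.

Lemma natr_double n : (2 * n%:R : R) = (n.*2)%:R.
Proof. by rewrite -muln2 natrM mulrC. Qed.

Lemma inAc_branch i u : (0 < i)%N -> branch i u -> inAc u -> odd i.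
Proof.
move=> i0 bu /asboolP[[|k]] [] //= _ /andP[lo hi].
rewrite !div1r natr_double doubleS -[X in X - 1]natr1 addrK in lo hi.
by rewrite -(branch_index i0 _ bu lo hi) //= odd_double.
Qed.

Lemma inBc_branch i u : (0 < i)%N -> branch i u -> inBc u -> ~~ odd i.
Proof.
move=> i0 bu /asboolP[k [k0 /andP[lo hi]]].
rewrite !div1r natr_double natr1 in lo hi.
by rewrite -(branch_index i0 _ bu lo hi) ?odd_double ?double_gt0.
Qed.

Lemma branch_inA i u : branch i u -> odd i -> inA u.
Proof.
move=> bu oi; apply/asboolP; exists (i./2).+1; split => //.
have ei : (i./2).*2.+1 = i by rewrite -[RHS](odd_double_half i) oi.
by rewrite !div1r natr_double doubleS -[X in X - 1]natr1 addrK ei.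
Qed.

Lemma branch_inB i u : (0 < i)%N -> branch i u -> ~~ odd i -> inB u.
Proof.
move=> i0 bu ei; apply/asboolP; exists i./2.
have ehalf : (i./2).*2 = i by rewrite -[RHS](odd_double_half i) (negbTE ei).
split; first by rewrite -double_gt0 ehalf.
by rewrite !div1r natr_double ehalf natr1.
Qed.

Lemma branch_classes i u : (0 < i)%N -> branch i u ->
  [/\ inA u = odd i, inAc u = odd i, inB u = ~~ odd i & inBc u = ~~ odd i].
Proof.
move=> i0 bu.
have inA_inAc : inA u -> inAc u.
  by move=> /asboolP[k [k0 /andP[lo hi]]]; apply/asboolP; exists k; rewrite k0 (ltW lo).
have inB_inBc : inB u -> inBc u.
  by move=> /asboolP[k [k0 /andP[lo hi]]]; apply/asboolP; exists k; rewrite k0 (ltW lo).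
split; apply/idP/idP.
- by move/inA_inAc; exact: inAc_branch.
- exact: branch_inA.
- exact: inAc_branch.
- by move/(branch_inA bu)/inA_inAc.
- by move/inB_inBc; exact: inBc_branch.
- exact: branch_inB.
- exact: inBc_branch.
- by move/(branch_inB i0 bu)/inB_inBc.
Qed.

Lemma floor_ceil_inv_branch i u : (0 < i)%N -> branch i u ->
  Num.floor (1 / u) = i%:Z /\ Num.ceil (1 / u) = i.+1%:Z.
Proof.
move=> i0 bu; have [_ lo hi] := branch_inv_bounds i0 bu; rewrite div1r.
split; [apply: floor_def|apply: ceil_def].
- by rewrite intrD -!pmulrn natr1 (ltW lo) hi.
- by rewrite intrB -!pmulrn -[X in X - 1]natr1 addrK lo (ltW hi).
Qed.

Definition Tslope k : R := if odd k then k.+1%:R else - k%:R.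
Definition Tshift k : R := if odd k then -1 else 1.
Definition ygain k : nat := if odd k then k else k.+1.

Lemma Tmap_branch k u : (0 < k)%N -> branch k u ->
  Tmap u = Tslope k * u + Tshift k.
Proof.
move=> k0 bu; have [fl ce] := floor_ceil_inv_branch k0 bu.
rewrite /Tmap /Tslope /Tshift; have [-> _ -> _] := branch_classes k0 bu.
by case: (odd k); rewrite /= ?fl ?ce -pmulrn // mulNr addrC.
Qed.

Lemma yn2_branch k u : (0 < k)%N -> branch k u ->
  yn 2 u = (ygain k)%:R * Tmap u.
Proof.
move=> k0 bu; have [fl ce] := floor_ceil_inv_branch k0 bu.
rewrite /yn /epsn /dn /sn /= big_nat1 big_geq // /d1 /s1 /ygain.
have [_ -> _ ->] := branch_classes k0 bu.
have N1_neq1 : (-1 == 1 :> R) = false by apply: lt_eqF; lra.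
case: (odd k); rewrite /= ?fl ?ce -pmulrn ?eqxx ?N1_neq1.
  by rewrite -natr1 addrK.
by rewrite natr1.
Qed.

Lemma ygain_gt0 k : (0 < ygain k)%N.
Proof. by rewrite /ygain; case: ifP => // /odd_gt0. Qed.

Lemma Tslope_neq0 k : (0 < k)%N -> Tslope k != 0.
Proof.
by move=> k0; rewrite /Tslope; case: ifP; rewrite ?oppr_eq0 pnatr_eq0 // -lt0n.
Qed.

Lemma rational_Tslope k : rational (Tslope k).
Proof.
by rewrite /Tslope; case: ifP => _; [exists k.+1%:R | exists (- k%:R)];
  rewrite ?rmorphN rmorph_nat.
Qed.

Lemma rational_Tshift k : rational (Tshift k).
Proof.
by rewrite /Tshift; case: ifP; [exists (-1) | exists 1]; rewrite ?rmorphN rmorph1.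
Qed.

Lemma normr_Tslope_ygain k : `|Tslope k| * (ygain k)%:R = k%:R * k.+1%:R.
Proof.
by rewrite /Tslope /ygain; case: ifP; rewrite ?normrN ger0_norm // mulrC.
Qed.

Lemma branch_TmapE k u : (0 < k)%N ->
  branch k u <-> 0 < Tslope k * u + Tshift k < ((ygain k)%:R)^-1.
Proof.
move=> k0; rewrite /branch /= in_itv /= /Tslope /Tshift /ygain.
have k_gt0 : (0 : R) < k%:R by rewrite ltr0n.
have kV : k%:R * (k%:R)^-1 = 1 :> R by rewrite mulfV ?gt_eqF.
have k1V : (k%:R + 1) * (k%:R + 1)^-1 = 1 :> R.
  by rewrite mulfV ?gt_eqF ?ltr_wpDr.
have kV_gt0 : (0 : R) < (k%:R)^-1 by rewrite invr_gt0.
have k1V_gt0 : (0 : R) < (k%:R + 1)^-1 by rewrite invr_gt0 ltr_wpDr.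
by case: ifP => _; rewrite -!natr1; split => /andP[lo hi]; apply/andP; split; nra.
Qed.

Lemma Tmap_irr01 x : irr01 x -> irr01 (Tmap x).
Proof.
move=> Ix; have [k k0 bx] := irr01_branch Ix.
have /andP[lo hi] := (branch_TmapE x k0).1 bx.
rewrite (Tmap_branch k0 bx); split.
  by rewrite lo (lt_le_trans hi) // invf_le1 ?ler1n ?ltr0n ?ygain_gt0.
apply: contra_not Ix.2.
exact: rational_affine_inv (Tslope_neq0 k0) (rational_Tslope k) (rational_Tshift k).
Qed.

Lemma iter_Tmap_irr01 n x : irr01 x -> irr01 (iter n Tmap x).
Proof. by move=> Ix; elim: n => //= n; exact: Tmap_irr01. Qed.

Lemma s1_irr01_neq0 x : irr01 x -> s1 x != 0.
Proof.
move=> Ix; have [k k0 bx] := irr01_branch Ix.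
rewrite /s1; have [_ -> _ ->] := branch_classes k0 bx.
by case: (odd k); rewrite ?oppr_eq0 oner_eq0.
Qed.

Lemma yn_iter n x : irr01 x -> yn n.+2 x = yn 2 (iter n Tmap x).
Proof.
move=> Ix; have eps_neq0 : epsn n.+1 x != 0.
  apply: (big_ind (fun v : R => v != 0)) => [|v w|k _]; first exact: oner_neq0.
    exact: mulf_neq0.
  exact/s1_irr01_neq0/iter_Tmap_irr01.
(* eps_(n+2) = eps_(n+1) * s_(n+1) with eps_(n+1) != 0: the sign test of y_(n+2)
   only sees s_1 (T^n x). *)
rewrite /yn /= {1}/epsn big_nat_recr //= -/(epsn n.+1 x).
rewrite -{2}[epsn n.+1 x]mulr1 (inj_eq (mulfI eps_neq0)) /epsn /=.
by rewrite big_nat1 big_geq.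
Qed.

Lemma preimage_branchE k a b r (g : R -> R) (A : set R) : (0 < k)%N ->
  a != 0 -> rational a -> rational b ->
  (forall u, branch k u -> g u = affine a b u) ->
  (forall u, branch k u <-> 0 < affine a b u < r) ->
  [set u | irr01 u /\ A (g u)] `&` branch k =
  affine a b @^-1` ((A `&` `]0, r[) `\` rational).
Proof.
move=> k0 a0 Qa Qb gE bE; apply/seteqP; split => [u [[[_ uQ] Agu] bu]|u].
  have fu := (bE u).1 bu; rewrite gE // in Agu; rewrite /= in_itv /= fu.
  by split => // /(rational_affine_inv a0 Qa Qb).
rewrite /= in_itv /= => -[[Afu /(bE u) bu] fQ].
rewrite gE //; split => //; split => //.
split; first by have := branch_sub01 k0 bu; rewrite /= in_itv.
by move=> uQ; apply: fQ; exact: rational_affine.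
Qed.

Lemma measure_preimage_branch k a b r (g : R -> R) (A : set R) : (0 < k)%N ->
  a != 0 -> rational a -> rational b -> measurable A ->
  (forall u, branch k u -> g u = affine a b u) ->
  (forall u, branch k u <-> 0 < affine a b u < r) ->
  let S := [set u | irr01 u /\ A (g u)] `&` branch k in
  measurable S /\ lam S = ((`|a|^-1)%:E * lam (A `&` `]0%R, r[))%E.
Proof.
move=> k0 a0 Qa Qb mA gE bE /=; rewrite (preimage_branchE _ k0 a0 Qa Qb gE bE).
have mAr : measurable (A `&` `]0, r[) by apply: measurableI mA _; exact: measurable_itv.
have mArQ : measurable ((A `&` `]0, r[) `\` rational).
  by apply: measurableD mAr _; exact: measurable_rational.
split; first exact: measurable_preimage_affine.
by rewrite measure_preimage_affine // measureD_rational.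
Qed.

Definition uniform c (S : set R) := [/\ S `<=` irr01, measurable S &
  forall j, (0 < j)%N -> lam (S `&` initial_itv j) = (c / j%:R)%:E].

Lemma uniform_branchwise c S : 0 <= c -> S `<=` irr01 ->
  (forall k, (0 < k)%N ->
    measurable (S `&` branch k) /\ lam (S `&` branch k) = (c%:E * lam (branch k))%E) ->
  uniform c S.
Proof.
move=> c0 Sirr hS; have mS k : (0 < k)%N -> measurable (S `&` branch k) by case/hS.
have measure_irr01_branch k : (0 < k)%N -> lam (irr01 `&` branch k) = lam (branch k).
  by move=> k0; apply: measure_irr01I; [exact: measurable_itv|exact: branch_sub01].
split => // [|j j0].
  rewrite -(setIidl (subset_trans Sirr irr01_sub_initial_itv1)) initial_itv_bigcup //.
  by apply: bigcup_measurable => k; exact: mS.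
(* The series of branch lengths is summed by decomposing irr01 itself. *)
rewrite measure_initial_itv_series //.
rewrite (eq_eseriesr (g := fun k => c%:E * lam (irr01 `&` branch k))%E); last first.
  move=> k; rewrite in_setE /= => jk.
  by rewrite (hS k _).2 ?measure_irr01_branch // (leq_trans j0).
rewrite nneseriesZl; last by move=> k _; exact: measure_ge0.
rewrite -measure_initial_itv_series // => [|k k0]; last first.
  by apply: measurableI; [exact: measurable_irr01|exact: measurable_itv].
rewrite measure_irr01I ?measure_initial_itv //; first exact: measurable_itv.
exact: initial_itv_sub01.
Qed.

Lemma uniform_preimage_Tmap c S : 0 <= c -> uniform c S ->
  uniform c [set u | irr01 u /\ S (Tmap u)].
Proof.
move=> c0 [Sirr mS hS]; apply: uniform_branchwise => // [u [] //|k k0].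
have [? ->] := measure_preimage_branch (g := Tmap) (r := ((ygain k)%:R)^-1)
  k0 (Tslope_neq0 k0) (rational_Tslope k) (rational_Tshift k) mS
  (fun u bu => Tmap_branch k0 bu) (fun u => branch_TmapE u k0).
split => //; rewrite -[`]0%R, _[]/(initial_itv (ygain k)) hS ?ygain_gt0 //.
rewrite measure_branch // -EFinM -normr_Tslope_ygain; congr EFin; field.
by rewrite pnatr_eq0 -lt0n ygain_gt0 normr_eq0 Tslope_neq0.
Qed.

Lemma uniform_yn2_le c : 0 <= c -> c <= 1 ->
  uniform c [set u | irr01 u /\ yn 2 u <= c].
Proof.
move=> c0 c1; apply: uniform_branchwise => // [u [] //|k k0].
set g : R := (ygain k)%:R.
have g_gt0 : 0 < g by rewrite ltr0n ygain_gt0.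
have ynE u : branch k u -> yn 2 u = affine (g * Tslope k) (g * Tshift k) u.
  by move=> bu; rewrite (yn2_branch k0 bu) (Tmap_branch k0 bu) /affine mulrDr mulrA.
have branchE u : branch k u <-> 0 < affine (g * Tslope k) (g * Tshift k) u < 1.
  rewrite branch_TmapE // /affine -mulrA -mulrDr pmulr_rgt0 // -ltr_pdivlMl //.
  by rewrite mulr1.
have mle : measurable [set x : R | x <= c].
  rewrite (_ : [set x | x <= c] = `]-oo, c]); first exact: measurable_itv.
  by apply/seteqP; split => x; rewrite /= in_itv.
have [? ->] := measure_preimage_branch (A := [set x | x <= c]) k0
  (mulf_neq0 (lt0r_neq0 g_gt0) (Tslope_neq0 k0))
  (rationalM (rational_nat _) (rational_Tslope k))
  (rationalM (rational_nat _) (rational_Tshift k)) mle ynE branchE.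
split => //.
rewrite -measure_irr01I; last 2 first.
- by apply: measurableI mle _; exact: measurable_itv.
- exact: subIsetr.
have -> : lam (irr01 `&` ([set x | x <= c] `&` `]0, 1[)) = c%:E.
  rewrite -(measure_irr01_le c0 c1); congr lam.
  apply/seteqP; split => [x [Ix [xc _]]|x [Ix xc]] /=; first by split.
  by rewrite in_itv /=; case: Ix.
rewrite measure_branch // -!EFinM normrM (gtr0_norm g_gt0) [g * _]mulrC.
by rewrite normr_Tslope_ygain mulrC.
Qed.

Lemma uniform_yn2_iter c n : 0 <= c -> c <= 1 ->
  uniform c [set x | irr01 x /\ yn 2 (iter n Tmap x) <= c].
Proof.
move=> c0 c1; elim: n => [|n IH]; first exact: uniform_yn2_le.
suff -> : [set x | irr01 x /\ yn 2 (iter n.+1 Tmap x) <= c] =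
    [set u | irr01 u /\ [set x | irr01 x /\ yn 2 (iter n Tmap x) <= c] (Tmap u)].
  exact: uniform_preimage_Tmap c0 IH.
apply/seteqP; split => x [Ix] /=; rewrite -iterS iterSr; last by case.
by move=> xc; split => //; split => //; exact: Tmap_irr01.
Qed.

Lemma uniform_measure c S : uniform c S -> lam S = c%:E.
Proof.
move=> [Sirr _ hS]; have := hS 1%N isT.
by rewrite divr1 setIidl //; exact: subset_trans Sirr irr01_sub_initial_itv1.
Qed.

End ContinuedFractionMap.

Theorem lemma3p4 (R : realType) (c : R) (hc0 : 0 <= c) (hc1 : c <= 1)
  (n : nat) (hn : (1 <= n)%N) :
  lebesgue_measure [set x : R | irr01 x /\ yn n x <= c] = (c%:E)%E.
Proof.
case: n hn => [//|[_|n _]]; first exact: (measure_irr01_le hc0 hc1).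
rewrite (_ : [set x | _] = [set x | irr01 x /\ yn 2 (iter n (@Tmap R) x) <= c]).
  exact/uniform_measure/uniform_yn2_iter.
by apply/seteqP; split => x [Ix] /=; rewrite (yn_iter _ Ix).
Qed.
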